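(* Consider a market with $n$ goods, supplies $w_i>0$ and demands $x_i:(0,\infty)^n\to(0,\infty)$ satisfying: (fixed spending) $\sum_ip_ix_i(p)=M$ for all $p$ (constant $M>0$); (WGS) for $j\ne i$, $x_j(p)$ is non-decreasing in $p_i$; (elasticity $E$) each $x_i$ is differentiable in $p_i$ and $\frac{x_i(p)}{p_i}\le-\frac{\partial x_i}{\partial p_i}(p)\le E\frac{x_i(p)}{p_i}$ for all $p$, where $E\ge1$. Let $0<\lambda\le\frac12$ with $\lambda(2E-1)\le\frac12$. Given $p$, define the simultaneous update $p'$ by $p_i'=p_i\big(1+\lambda\min\{1,\frac{x_i(p)-w_i}{w_i}\}\big)$ for all $i$, and let $\phi(q)=\sum_iq_i|x_i(q)-w_i|$. Then \[ \phi(p)-\phi(p')\ \ge\ \sum_i\lambda\, p_i|x_i(p)-w_i|\min\Big\{1,\frac{w_i}{|x_i(p)-w_i|}\Big\} \] (terms with $x_i(p)=w_i$ being $0$). In particular, if $x_i(p)\le d\,w_i$ for all $i$ with $d\ge 2$, then $\phi(p')\le\big(1-\frac{\lambda}{d-1}\big)\phi(p)$. *)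

From Stdlib Require Import Reals Arith.
Open Scope R_scope.

(* Goods are indexed by 0..n-1; a price vector is a function nat -> R,
   only its first n coordinates are meaningful. *)

Fixpoint sumR (n : nat) (f : nat -> R) : R :=
  match n with
  | O => 0
  | S k => sumR k f + f k
  end.

Definition pos_prices (n : nat) (p : nat -> R) : Prop :=
  forall i, (i < n)%nat -> 0 < p i.

Definition upd (p : nat -> R) (i : nat) (t : R) : nat -> R :=
  fun j => if Nat.eqb j i then t else p j.

Definition update (n : nat) (lam : R) (w : nat -> R)
    (x : nat -> (nat -> R) -> R) (p : nat -> R) : nat -> R :=
  fun i => if Nat.ltb i n
           then p i * (1 + lam * Rmin 1 ((x i p - w i) / w i))
           else p i.

Definition phi (n : nat) (w : nat -> R) (x : nat -> (nat -> R) -> R)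
    (q : nat -> R) : R :=
  sumR n (fun i => q i * Rabs (x i q - w i)).

From Stdlib Require Import Reals Arith Lra Lia Psatz FunctionalExtensionality ClassicalEpsilon.
Open Scope R_scope.

(* Let p' be the updated prices and q := min(p, p') coordinatewise.  Total
   spending is M at p, p' and q, so it suffices to prove, for each good i,
     p'_i |x_i(p') - w_i| <= |p_i x_i(p) - p'_i w_i| + (p'_i x_i(p') + p_i x_i(p) - 2 q_i x_i(q)),
   where |p_i x_i(p) - p'_i w_i| is exactly p_i |x_i(p) - w_i| minus the gain of good i.
   By WGS, lowering the other prices to q only lowers x_i; by the elasticity bound,
   t x_i(t) exp(K t) is nondecreasing in the own price t as soon as K t >= E - 1.
   Together with lambda (2E - 1) <= 1/2 these give the per-good bound both when the
   price of i falls (x_i(p) < w_i) and when it rises. *)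

Lemma sumR_ext n f g : (forall i, (i < n)%nat -> f i = g i) -> sumR n f = sumR n g.
Proof.
  induction n as [|n IH]; intros H; simpl; [reflexivity|].
  rewrite IH, H; [reflexivity|lia|intros; apply H; lia].
Qed.

Lemma sumR_le n f g : (forall i, (i < n)%nat -> f i <= g i) -> sumR n f <= sumR n g.
Proof.
  induction n as [|n IH]; intros H; simpl; [lra|].
  apply Rplus_le_compat; [apply IH; intros; apply H|apply H]; lia.
Qed.

Lemma sumR_add n f g : sumR n (fun i => f i + g i) = sumR n f + sumR n g.
Proof. induction n as [|n IH]; simpl; [lra|]. rewrite IH; ring. Qed.

Lemma sumR_sub n f g : sumR n (fun i => f i - g i) = sumR n f - sumR n g.
Proof. induction n as [|n IH]; simpl; [lra|]. rewrite IH; ring. Qed.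

Lemma sumR_scal n c f : sumR n (fun i => c * f i) = c * sumR n f.
Proof. induction n as [|n IH]; simpl; [lra|]. rewrite IH; ring. Qed.

Lemma upd_id (p : nat -> R) i : upd p i (p i) = p.
Proof.
  apply functional_extensionality; intro j; unfold upd.
  destruct (Nat.eqb_spec j i); [subst|]; reflexivity.
Qed.

Lemma upd_upd (p : nat -> R) i t s : upd (upd p i t) i s = upd p i s.
Proof. apply functional_extensionality; intro j; unfold upd; now destruct (Nat.eqb j i). Qed.

Lemma upd_eq (p : nat -> R) i t : upd p i t i = t.
Proof. unfold upd; now rewrite Nat.eqb_refl. Qed.

Lemma upd_neq (p : nat -> R) i j t : j <> i -> upd p i t j = p j.
Proof. intro h; unfold upd; now destruct (Nat.eqb_spec j i). Qed.

Lemma pos_prices_upd n (p : nat -> R) i t : pos_prices n p -> 0 < t -> pos_prices n (upd p i t).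
Proof. intros hp ht j hj; unfold upd; destruct (Nat.eqb j i); auto. Qed.

Lemma update_lt n lam w x p i : (i < n)%nat ->
  update n lam w x p i = p i * (1 + lam * Rmin 1 ((x i p - w i) / w i)).
Proof. intro hi; unfold update; now rewrite (proj2 (Nat.ltb_lt i n) hi). Qed.

Lemma update_ge n lam w x p i : (n <= i)%nat -> update n lam w x p i = p i.
Proof. intro hi; unfold update; now rewrite (proj2 (Nat.ltb_ge i n) hi). Qed.

Lemma Rmin_div_mul a b : 0 < a -> Rmin 1 (b / a) * a = Rmin a b.
Proof.
  intro ha. assert (hb : b / a * a = b) by (field; lra).
  unfold Rmin; destruct (Rle_dec 1 (b / a)) as [h|h]; destruct (Rle_dec a b) as [h'|h'].
  - lra.
  - apply (Rmult_le_compat_r a) in h; [rewrite hb in h|]; lra.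
  - exfalso; apply h. apply (Rmult_le_reg_r a); [|rewrite hb]; lra.
  - exact hb.
Qed.

Lemma Rabs_sub_scal_Rmin d w lam : 0 < w -> -w < d -> 0 <= lam <= 1 ->
  Rabs (d - lam * Rmin w d) = Rabs d - lam * Rmin (Rabs d) w.
Proof.
  intros hw hd hlam. rewrite (Rmin_comm (Rabs d)).
  destruct (Rle_lt_dec 0 d) as [h|h].
  - rewrite (Rabs_pos_eq d) by exact h.
    assert (0 <= Rmin w d <= d) by (split; [apply Rmin_glb|apply Rmin_r]; lra).
    apply Rabs_pos_eq; nra.
  - rewrite (Rabs_left d), Rmin_right, Rmin_right by lra.
    rewrite Rabs_left1; [ring|nra].
Qed.

Lemma Rabs_mul_Rmin_div d w : 0 < w -> Rabs d * Rmin 1 (w / Rabs d) = Rmin (Rabs d) w.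
Proof.
  intro hw. destruct (Req_dec (Rabs d) 0) as [h0|h0].
  - rewrite h0, Rmult_0_l, Rmin_left by lra. reflexivity.
  - rewrite Rmult_comm. apply Rmin_div_mul. pose proof (Rabs_pos d). lra.
Qed.

Lemma Rmin_ge_div a b k : 1 <= k -> 0 <= a -> a <= k * b -> a / k <= Rmin a b.
Proof.
  intros hk ha hab. apply Rmin_glb.
  - unfold Rdiv. rewrite <- (Rmult_1_r a) at 2. apply Rmult_le_compat_l; [lra|].
    rewrite <- Rinv_1. apply Rinv_le_contravar; lra.
  - apply (Rmult_le_reg_r k); [lra|]. unfold Rdiv. rewrite Rmult_assoc, Rinv_l by lra. lra.
Qed.

Lemma Rabs_sub_le_of_undershoot S S' W Q : S < W -> Q <= W -> Q <= S' ->
  Rabs (S' - W) <= Rabs (S - W) + (S' + S - 2 * Q).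
Proof. intros. rewrite (Rabs_left (S - W)) by lra. unfold Rabs; destruct Rcase_abs; lra. Qed.

Lemma Rabs_sub_le_of_overshoot S S' W Q y : 0 <= y -> y * S <= S - W -> 0 <= Q <= S ->
  (1 - y) * Q <= S' -> Rabs (S' - W) <= Rabs (S - W) + (S' + S - 2 * Q).
Proof.
  intros hy hSW hQ hS'. assert (y * Q <= y * S) by (apply Rmult_le_compat_l; lra).
  assert (0 <= y * S) by (apply Rmult_le_pos; lra).
  rewrite (Rabs_pos_eq (S - W)) by lra. unfold Rabs; destruct Rcase_abs; lra.
Qed.

Lemma exp_le_1_add_2mul y : 0 <= y <= 1/2 -> exp y <= 1 + 2 * y.
Proof.
  intro hy. pose proof (exp_ineq1_le (- y)).
  assert (he : exp y * exp (- y) = 1) by (rewrite <- exp_plus, Rplus_opp_r; apply exp_0).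
  pose proof (exp_pos y). nra.
Qed.

Lemma mul_one_sub_le_of_le_mul_exp Q B y : 0 <= Q -> 0 <= B -> Q <= B * exp y ->
  (1 - y) * Q <= B.
Proof.
  intros hQ hB h. pose proof (exp_ineq1_le (- y)).
  assert (he : exp y * exp (- y) = 1) by (rewrite <- exp_plus, Rplus_opp_r; apply exp_0).
  pose proof (exp_pos y). pose proof (exp_pos (- y)).
  destruct (Rle_lt_dec 0 (1 - y)); [|nra].
  apply Rle_trans with (exp (- y) * (B * exp y)).
  - apply Rle_trans with ((1 - y) * (B * exp y)).
    + now apply Rmult_le_compat_l.
    + apply Rmult_le_compat_r; [apply Rmult_le_pos|]; lra.
  - replace (exp (- y) * (B * exp y)) with (B * (exp y * exp (- y))) by ring.
    rewrite he; lra.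
Qed.

Lemma derivable_pt_lim_exp_scal K t : derivable_pt_lim (fun s => exp (K * s)) t (K * exp (K * t)).
Proof.
  rewrite Rmult_comm.
  apply (derivable_pt_lim_comp (fun s => K * s) exp).
  - pose proof (derivable_pt_lim_scal id K t 1 (derivable_pt_lim_id t)) as H.
    rewrite Rmult_1_r in H; exact H.
  - apply derivable_pt_lim_exp.
Qed.

(* With elasticity at most [E], the derivative of [t f t] is at least [-(E-1) f t];
   the factor [exp (K t)] compensates once [K t >= E - 1]. *)
Lemma spending_mul_exp_nondecreasing (f f' : R -> R) E K a b :
  0 < a <= b -> 0 <= K -> E - 1 <= K * a ->
  (forall t, a <= t <= b -> derivable_pt_lim f t (f' t)) ->
  (forall t, a <= t <= b -> 0 < f t /\ - f' t <= E * (f t / t)) ->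
  a * f a * exp (K * a) <= b * f b * exp (K * b).
Proof.
  intros [ha hab] hK hKa hder hel.
  destruct hab as [hlt|<-]; [|lra].
  set (g' := fun t => (1 * f t + t * f' t) * exp (K * t) + t * f t * (K * exp (K * t))).
  assert (hg : forall t, a <= t <= b ->
      derivable_pt_lim (fun s => s * f s * exp (K * s)) t (g' t)).
  { intros t ht.
    apply (derivable_pt_lim_mult (fun s => s * f s) (fun s => exp (K * s))).
    - apply (derivable_pt_lim_mult id f); [apply derivable_pt_lim_id|now apply hder].
    - apply derivable_pt_lim_exp_scal. }
  destruct (MVT_cor2 _ g' a b hlt hg) as [c [hc hcab]].
  assert (hg'c : 0 <= g' c).
  { destruct (hel c ltac:(lra)) as [hfc hf'c].
    assert (hcf' : - (c * f' c) <= E * f c).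
    { apply (Rmult_le_compat_l c) in hf'c; [|lra].
      replace (c * (E * (f c / c))) with (E * f c) in hf'c by (field; lra). lra. }
    assert (K * a <= K * c) by (apply Rmult_le_compat_l; lra).
    assert (0 <= f c * (K * c - (E - 1))) by (apply Rmult_le_pos; lra).
    unfold g'. pose proof (exp_pos (K * c)).
    replace ((1 * f c + c * f' c) * exp (K * c) + c * f c * (K * exp (K * c)))
      with ((f c + c * f' c + c * f c * K) * exp (K * c)) by ring.
    apply Rmult_le_pos; nra. }
  nra.
Qed.

Lemma overshoot_margin x w lam c : 0 < w <= x -> 0 <= c -> 0 < lam ->
  lam * (2 * c + 1) <= 1 ->
  c * lam * Rmin 1 ((x - w) / w) * x <= x - (1 + lam * Rmin 1 ((x - w) / w)) * w.
Proof.
  intros [hw hxw] hc hlam hl.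
  pose proof (Rmin_div_mul w (x - w) hw) as hmw.
  set (m := Rmin 1 ((x - w) / w)) in *.
  assert (hm1 : m <= 1) by apply Rmin_l.
  assert (0 <= c * lam) by (apply Rmult_le_pos; lra).
  unfold Rmin in hmw; destruct (Rle_dec w (x - w)).
  - assert (hm : m = 1) by (apply (Rmult_eq_reg_r w); lra). rewrite hm.
    assert (0 <= (x - 2 * w) * (1 - c * lam)) by (apply Rmult_le_pos; lra).
    assert (0 <= w * (1 - lam * (2 * c + 1))) by (apply Rmult_le_pos; lra).
    nra.
  - assert (0 <= m) by (apply (Rmult_le_reg_r w); lra).
    assert (c * lam * m * x <= c * lam * m * (2 * w)) by (apply Rmult_le_compat_l; nra).
    assert (0 <= m * w * (1 - lam * (2 * c + 1))) by (apply Rmult_le_pos; nra).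
    nra.
Qed.

Lemma undershoot_margin x w lam c : 0 < x < w -> 0 <= c -> 0 < lam ->
  lam * (4 * c + 1) <= 1 ->
  x * (1 - 4 * c * lam * ((x - w) / w)) <= (1 + lam * ((x - w) / w)) * w.
Proof.
  intros hx hc hlam hl.
  assert (hmw : (x - w) / w * w = x - w) by (field; lra).
  set (m := (x - w) / w) in *.
  assert (m < 0) by nra.
  assert (0 <= c * lam) by (apply Rmult_le_pos; lra).
  assert (4 * c * lam * x <= 4 * c * lam * w) by nra.
  assert (0 <= w * (1 - lam * (4 * c + 1))) by (apply Rmult_le_pos; lra).
  assert (0 <= - m * ((1 - lam) * w - 4 * c * lam * x)) by (apply Rmult_le_pos; lra).
  nra.
Qed.

Section Market.

Variables (n : nat) (w : nat -> R) (x : nat -> (nat -> R) -> R) (M E : R).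

Hypothesis hxpos : forall p, pos_prices n p -> forall i, (i < n)%nat -> 0 < x i p.
Hypothesis hWGS : forall i j, (i < n)%nat -> (j < n)%nat -> j <> i ->
  forall p s t, pos_prices n p -> 0 < s -> s <= t -> x j (upd p i s) <= x j (upd p i t).
Hypothesis hElast : forall p, pos_prices n p -> forall i, (i < n)%nat ->
  exists l, derivable_pt_lim (fun t => x i (upd p i t)) (p i) l /\
    x i p / p i <= - l /\ - l <= E * (x i p / p i).

(* Raise the prices from [q] to [r] one coordinate at a time; only the
   coordinates [j <> i] move, and each move raises [x i] by WGS. *)
Lemma demand_le_of_prices_le i q r : (i < n)%nat -> pos_prices n q -> pos_prices n r ->
  (forall j, (j < n)%nat -> q j <= r j) -> (forall j, (n <= j)%nat -> q j = r j) ->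
  q i = r i -> x i q <= x i r.
Proof.
  intros hi hq hr hle hout heq.
  set (mix k j := if Nat.ltb j k then r j else q j).
  assert (hmix : forall k, pos_prices n (mix k)).
  { intros k j hj; unfold mix; destruct (Nat.ltb j k); auto. }
  assert (hstep : forall k, mix (S k) = upd (mix k) k (r k)).
  { intro k; apply functional_extensionality; intro j; unfold mix, upd.
    destruct (Nat.eqb_spec j k), (Nat.ltb_spec j (S k)), (Nat.ltb_spec j k);
      subst; reflexivity || lia. }
  assert (hfix : forall k, mix k = upd (mix k) k (q k)).
  { intro k; apply functional_extensionality; intro j; unfold mix, upd.
    destruct (Nat.eqb_spec j k), (Nat.ltb_spec j k); subst; reflexivity || lia. }
  assert (hmono : forall k, (k <= n)%nat -> x i q <= x i (mix k)).
  { induction k as [|k IH]; intro hk.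
    - apply Req_le; reflexivity.
    - rewrite hstep. destruct (Nat.eq_dec k i) as [->|hki].
      + rewrite <- heq, <- hfix; apply IH; lia.
      + rewrite hfix in IH. eapply Rle_trans; [apply IH; lia|].
        apply hWGS; auto; lia. }
  replace r with (mix n).
  - now apply hmono.
  - apply functional_extensionality; intro j; unfold mix.
    destruct (Nat.ltb_spec j n); [reflexivity|]. now apply hout.
Qed.

Lemma own_spending_exp_bound q i a b K : pos_prices n q -> (i < n)%nat ->
  0 < a <= b -> 0 <= K -> E - 1 <= K * a ->
  a * x i (upd q i a) <= b * x i (upd q i b) * exp (K * (b - a)).
Proof.
  intros hq hi hab hK hKa.
  set (f t := x i (upd q i t)).
  assert (hdf : forall t, exists l, 0 < t ->
      derivable_pt_lim f t l /\ 0 < f t /\ - l <= E * (f t / t)).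
  { intro t. destruct (Rlt_le_dec 0 t) as [ht|ht]; [|exists 0; lra].
    destruct (hElast (upd q i t) (pos_prices_upd n q i t hq ht) i hi) as [l [hd [_ hl]]].
    exists l; intros _. rewrite upd_eq in hd, hl.
    unfold f; repeat split; [|apply hxpos; [now apply pos_prices_upd|exact hi]|exact hl].
    eapply derivable_pt_lim_ext; [|exact hd]. intro s; simpl; now rewrite upd_upd. }
  destruct (choice _ hdf) as [f' hf'].
  pose proof (spending_mul_exp_nondecreasing f f' E K a b hab hK hKa) as hmono.
  assert (hmono' : a * f a * exp (K * a) <= b * f b * exp (K * b)).
  { apply hmono; intros t ht; destruct (hf' t ltac:(lra)) as [hd [hpos hl]]; auto. }
  replace (K * b) with (K * a + K * (b - a)) in hmono' by ring.
  rewrite exp_plus in hmono'. pose proof (exp_pos (K * a)).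
  apply (Rmult_le_reg_r (exp (K * a))); [lra|]. unfold f in hmono'. lra.
Qed.

Section PriceStep.

Variables (lam : R) (p : nat -> R).

Hypothesis hw : forall i, (i < n)%nat -> 0 < w i.
Hypothesis hE1 : 1 <= E.
Hypothesis hlam : 0 < lam.
Hypothesis hlamE : lam * (2 * E - 1) <= 1/2.
Hypothesis hp : pos_prices n p.

Let p' := update n lam w x p.
Let step i := Rmin 1 ((x i p - w i) / w i).
Let q j := Rmin (p j) (p' j).

Lemma step_bounds i : (i < n)%nat -> -1 < step i <= 1.
Proof.
  intro hi. pose proof (hw i hi). pose proof (hxpos p hp i hi).
  pose proof (Rmin_div_mul (w i) (x i p - w i) ltac:(lra)) as hmw.
  split; [|apply Rmin_l].
  assert (- w i < Rmin (w i) (x i p - w i)) by (apply Rmin_glb_lt; lra).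
  apply (Rmult_lt_reg_r (w i)); [lra|]. fold (step i) in hmw. lra.
Qed.

Lemma update_price_pos : pos_prices n p'.
Proof.
  intros i hi. unfold p'; rewrite update_lt by exact hi.
  pose proof (step_bounds i hi). pose proof (hp i hi).
  apply Rmult_lt_0_compat; [lra|]. fold (step i). nra.
Qed.

Lemma meet_price_pos : pos_prices n q.
Proof. intros j hj. apply Rmin_pos; [apply hp|apply update_price_pos]; exact hj. Qed.

Lemma meet_price_ge j : (n <= j)%nat -> q j = p j /\ q j = p' j.
Proof. intro hj. unfold q, p'. rewrite update_ge, Rmin_left by (exact hj || lra). now split. Qed.

Lemma lam_le_half : lam <= 1/2.
Proof. assert (0 <= lam * (2 * E - 2)) by (apply Rmult_le_pos; lra). lra. Qed.

Lemma update_price_eq i : (i < n)%nat -> p' i = p i * (1 + lam * step i).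
Proof. intro hi; unfold p'; now rewrite update_lt. Qed.

Lemma gap_update_eq i : (i < n)%nat ->
  p i * x i p - p' i * w i = p i * ((x i p - w i) - lam * Rmin (w i) (x i p - w i)).
Proof.
  intro hi. pose proof (hw i hi).
  rewrite <- (Rmin_div_mul (w i)) by lra. rewrite update_price_eq by exact hi.
  unfold step; ring.
Qed.

Lemma step_eq_of_lt i : (i < n)%nat -> x i p < w i ->
  step i = (x i p - w i) / w i /\ step i < 0.
Proof.
  intros hi hxw. pose proof (hw i hi).
  assert (hdiv : (x i p - w i) / w i < 0).
  { apply (Rmult_lt_reg_r (w i)); [lra|].
    replace ((x i p - w i) / w i * w i) with (x i p - w i) by (field; lra). lra. }
  assert (hstep : step i = (x i p - w i) / w i) by (apply Rmin_right; lra).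
  split; lra.
Qed.

Lemma step_nonneg_of_ge i : (i < n)%nat -> w i <= x i p -> 0 <= step i.
Proof.
  intros hi hxw. pose proof (hw i hi).
  pose proof (Rmin_div_mul (w i) (x i p - w i) ltac:(lra)) as hmw.
  assert (0 <= Rmin (w i) (x i p - w i)) by (apply Rmin_glb; lra).
  apply (Rmult_le_reg_r (w i)); [lra|]. fold (step i) in hmw. lra.
Qed.

Lemma meet_price_eq_update i : (i < n)%nat -> x i p < w i -> q i = p' i.
Proof.
  intros hi hxw. apply Rmin_right. rewrite update_price_eq by exact hi.
  destruct (step_eq_of_lt i hi hxw) as [_ hneg]. pose proof (hp i hi).
  assert (lam * step i < 0) by (apply Rmult_pos_neg; lra).
  assert (p i * (lam * step i) < 0) by (apply Rmult_pos_neg; lra). nra.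
Qed.

Lemma meet_price_eq_old i : (i < n)%nat -> w i <= x i p -> q i = p i.
Proof.
  intros hi hxw. apply Rmin_left. rewrite update_price_eq by exact hi.
  pose proof (step_nonneg_of_ge i hi hxw). pose proof (hp i hi).
  assert (0 <= p i * (lam * step i)) by (apply Rmult_le_pos; nra). nra.
Qed.

(* By WGS [x_i(q) <= x_i(upd p i p'_i)]; lowering the own price from [p_i] to
   [p'_i >= p_i / 2] raises spending by a factor at most [exp (-2 (E-1) lam step_i)]
   (take [K = 2 (E-1) / p_i]), and [exp y <= 1 + 2 y] turns this into [undershoot_margin]. *)
Lemma undershoot_meet_spending_le i : (i < n)%nat -> x i p < w i ->
  q i * x i q <= p' i * w i.
Proof.
  intros hi hxw.
  pose proof (hw i hi). pose proof (hp i hi). pose proof (hxpos p hp i hi).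
  pose proof (update_price_pos i hi). pose proof lam_le_half.
  destruct (step_eq_of_lt i hi hxw) as [hstep hneg].
  pose proof (step_bounds i hi). pose proof (update_price_eq i hi) as hp'i.
  set (c := E - 1).
  assert (hdem : x i q <= x i (upd p i (p' i))).
  { apply demand_le_of_prices_le; auto using meet_price_pos.
    - now apply pos_prices_upd, update_price_pos.
    - intros j _; destruct (Nat.eq_dec j i) as [->|hji].
      + rewrite upd_eq; apply Rmin_r.
      + rewrite upd_neq by exact hji; apply Rmin_l.
    - intros j hj; rewrite upd_neq by lia; apply meet_price_ge, hj.
    - now rewrite upd_eq, meet_price_eq_update. }
  set (y := - 2 * c * lam * step i).
  assert (hy : 0 <= y <= 1/2).
  { assert (0 <= c * lam) by (apply Rmult_le_pos; unfold c; lra).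
    assert (c * lam <= 1/4) by (unfold c; nra). unfold y; nra. }
  assert (hown : p' i * x i (upd p i (p' i)) <= p i * x i p * exp y).
  { pose proof (own_spending_exp_bound p i (p' i) (p i) (2 * c / p i) hp hi) as hown.
    rewrite upd_id in hown.
    replace y with (2 * c / p i * (p i - p' i)) by (rewrite hp'i; unfold y; field; lra).
    assert (p' i <= p i) by (rewrite <- (meet_price_eq_update i hi hxw); apply Rmin_l).
    apply hown; [lra| |].
    - apply Rmult_le_pos; [unfold c; lra|left; apply Rinv_0_lt_compat; lra].
    - rewrite hp'i.
      replace (2 * c / p i * (p i * (1 + lam * step i))) with (2 * c * (1 + lam * step i))
        by (field; lra).
      assert (0 <= c * (2 * (1 + lam * step i) - 1)) by (apply Rmult_le_pos; unfold c; nra).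
      unfold c in *; lra. }
  pose proof (undershoot_margin (x i p) (w i) lam c ltac:(lra) ltac:(unfold c; lra) hlam
                ltac:(unfold c; lra)) as hmargin.
  rewrite <- hstep in hmargin. fold y in hmargin.
  rewrite meet_price_eq_update by assumption.
  apply Rle_trans with (p' i * x i (upd p i (p' i))); [apply Rmult_le_compat_l; lra|].
  apply (Rle_trans _ _ _ hown). apply Rle_trans with (p i * x i p * (1 + 2 * y)).
  - apply Rmult_le_compat_l; [nra|]. now apply exp_le_1_add_2mul.
  - rewrite hp'i. unfold y in *. nra.
Qed.

Lemma undershoot_term_le i : (i < n)%nat -> x i p < w i ->
  Rabs (p' i * x i p' - p' i * w i) <=
    Rabs (p i * x i p - p' i * w i) + (p' i * x i p' + p i * x i p - 2 * (q i * x i q)).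
Proof.
  intros hi hxw. pose proof (hw i hi). pose proof (hp i hi). pose proof lam_le_half.
  pose proof (update_price_pos i hi).
  apply Rabs_sub_le_of_undershoot.
  - assert (p i * x i p - p' i * w i < 0); [|lra].
    rewrite gap_update_eq by exact hi. rewrite Rmin_right by lra.
    apply Rmult_pos_neg; nra.
  - now apply undershoot_meet_spending_le.
  - rewrite meet_price_eq_update by assumption. apply Rmult_le_compat_l; [lra|].
    apply demand_le_of_prices_le; auto using meet_price_pos, update_price_pos.
    + intros j _; apply Rmin_r.
    + intros j hj; apply meet_price_ge, hj.
    + now apply meet_price_eq_update.
Qed.

(* Raising the own price of [q] from [p_i] to [p'_i] lowers spending by a factor at
   most [exp ((E-1) lam step_i)] (take [K = (E-1) / p_i]); by WGS the demand at
   [upd q i p'_i] is at most [x_i(p')]. *)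
Lemma overshoot_meet_spending_le i : (i < n)%nat -> w i <= x i p ->
  (1 - (E - 1) * lam * step i) * (q i * x i q) <= p' i * x i p'.
Proof.
  intros hi hxw.
  pose proof (hp i hi). pose proof (update_price_pos i hi).
  pose proof meet_price_pos as hq. pose proof (hxpos q hq i hi).
  pose proof (step_nonneg_of_ge i hi hxw). pose proof (update_price_eq i hi) as hp'i.
  pose proof (meet_price_eq_old i hi hxw) as hqi.
  pose proof (hq i hi). pose proof (hxpos p' update_price_pos i hi).
  assert (q i <= p' i) by apply Rmin_r.
  set (r := upd q i (p' i)).
  assert (hr : pos_prices n r) by now apply pos_prices_upd.
  assert (hdem : x i r <= x i p').
  { apply demand_le_of_prices_le; auto using update_price_pos.
    - intros j _; destruct (Nat.eq_dec j i) as [->|hji].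
      + unfold r; rewrite upd_eq; lra.
      + unfold r; rewrite upd_neq by exact hji; apply Rmin_r.
    - intros j hj; unfold r; rewrite upd_neq by lia; apply meet_price_ge, hj.
    - unfold r; now rewrite upd_eq. }
  pose proof (own_spending_exp_bound q i (q i) (p' i) ((E - 1) / q i) hq hi) as hown.
  rewrite upd_id in hown. fold r in hown.
  replace ((E - 1) / q i * (p' i - q i)) with ((E - 1) * lam * step i) in hown
    by (rewrite hqi, hp'i; field; lra).
  apply mul_one_sub_le_of_le_mul_exp; [apply Rmult_le_pos; lra|apply Rmult_le_pos; lra|].
  pose proof (exp_pos ((E - 1) * lam * step i)).
  apply (Rle_trans _ _ _ (hown ltac:(lra)
    ltac:(apply Rmult_le_pos; [lra|left; apply Rinv_0_lt_compat; lra])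
    ltac:(right; field; lra))).
  apply Rmult_le_compat_r; [lra|]. apply Rmult_le_compat_l; lra.
Qed.

Lemma overshoot_term_le i : (i < n)%nat -> w i <= x i p ->
  Rabs (p' i * x i p' - p' i * w i) <=
    Rabs (p i * x i p - p' i * w i) + (p' i * x i p' + p i * x i p - 2 * (q i * x i q)).
Proof.
  intros hi hxw. pose proof (hw i hi). pose proof (hp i hi). pose proof (hxpos p hp i hi).
  pose proof (hxpos q meet_price_pos i hi). pose proof (step_nonneg_of_ge i hi hxw).
  pose proof (meet_price_eq_old i hi hxw) as hqi.
  apply Rabs_sub_le_of_overshoot with (y := (E - 1) * lam * step i).
  - apply Rmult_le_pos; [apply Rmult_le_pos|]; lra.
  - pose proof (overshoot_margin (x i p) (w i) lam (E - 1) ltac:(lra) ltac:(lra) hlam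
                  ltac:(lra)) as hmargin.
    fold (step i) in hmargin. rewrite update_price_eq by exact hi. nra.
  - rewrite hqi. split; [apply Rmult_le_pos; lra|]. apply Rmult_le_compat_l; [lra|].
    apply demand_le_of_prices_le; auto using meet_price_pos.
    + intros j _; apply Rmin_l.
    + intros j hj; apply meet_price_ge, hj.
  - now apply overshoot_meet_spending_le.
Qed.

Lemma potential_term_le i : (i < n)%nat ->
  p' i * Rabs (x i p' - w i) <=
    p i * Rabs (x i p - w i) - lam * (p i * Rmin (Rabs (x i p - w i)) (w i))
    + (p' i * x i p' + p i * x i p - 2 * (q i * x i q)).
Proof.
  intro hi. pose proof (hw i hi). pose proof (hp i hi). pose proof (hxpos p hp i hi).
  pose proof lam_le_half.
  rewrite <- (Rabs_pos_eq (p' i)) at 1 by (left; now apply update_price_pos).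
  rewrite <- Rabs_mult, Rmult_minus_distr_l.
  replace (p i * Rabs (x i p - w i) - lam * (p i * Rmin (Rabs (x i p - w i)) (w i)))
    with (Rabs (p i * x i p - p' i * w i)).
  - destruct (Rlt_le_dec (x i p) (w i)).
    + now apply undershoot_term_le.
    + now apply overshoot_term_le.
  - rewrite gap_update_eq, Rabs_mult, Rabs_pos_eq, Rabs_sub_scal_Rmin by (exact hi || lra).
    ring.
Qed.

Hypothesis hspend : forall r, pos_prices n r -> sumR n (fun i => r i * x i r) = M.

Lemma potential_decrease :
  phi n w x p' <= phi n w x p - sumR n (fun i => lam * (p i * Rmin (Rabs (x i p - w i)) (w i))).
Proof.
  unfold phi. eapply Rle_trans; [apply sumR_le; intros i hi; apply potential_term_le, hi|].
  rewrite sumR_add, sumR_sub, sumR_sub, sumR_add, sumR_scal, sumR_scal.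
  rewrite (hspend p' update_price_pos), (hspend p hp), (hspend q meet_price_pos). lra.
Qed.

End PriceStep.

End Market.

Theorem mainTheorem7
  (n : nat) (w : nat -> R) (x : nat -> (nat -> R) -> R) (M E lam : R)
  (hw : forall i, (i < n)%nat -> 0 < w i)
  (hxpos : forall p, pos_prices n p -> forall i, (i < n)%nat -> 0 < x i p)
  (hM : 0 < M)
  (hspend : forall p, pos_prices n p -> sumR n (fun i => p i * x i p) = M)
  (hWGS : forall i j, (i < n)%nat -> (j < n)%nat -> j <> i ->
     forall p s t, pos_prices n p -> 0 < s -> s <= t ->
       x j (upd p i s) <= x j (upd p i t))
  (hE1 : 1 <= E)
  (hElast : forall p, pos_prices n p -> forall i, (i < n)%nat ->
     exists l, derivable_pt_lim (fun t => x i (upd p i t)) (p i) l /\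
       x i p / p i <= - l /\ - l <= E * (x i p / p i))
  (hlam : 0 < lam <= 1/2) (hlamE : lam * (2 * E - 1) <= 1/2)
  (p : nat -> R) (hp : pos_prices n p) :
  phi n w x p - phi n w x (update n lam w x p) >=
    sumR n (fun i => lam * p i * Rabs (x i p - w i)
                      * Rmin 1 (w i / Rabs (x i p - w i)))
  /\
  (forall d, 2 <= d -> (forall i, (i < n)%nat -> x i p <= d * w i) ->
     phi n w x (update n lam w x p) <= (1 - lam / (d - 1)) * phi n w x p).
Proof.
  pose proof (potential_decrease n w x M E hxpos hWGS hElast lam p hw hE1
                (proj1 hlam) hlamE hp hspend) as hdec.
  split.
  - rewrite (sumR_ext _ _ (fun i => lam * (p i * Rmin (Rabs (x i p - w i)) (w i)))); [lra|].
    intros i hi. rewrite <- (Rabs_mul_Rmin_div _ _ (hw i hi)). ring.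
  - intros d hd hxd.
    assert (hgain : lam / (d - 1) * phi n w x p <=
        sumR n (fun i => lam * (p i * Rmin (Rabs (x i p - w i)) (w i)))).
    { unfold phi. rewrite <- sumR_scal. apply sumR_le. intros i hi.
      pose proof (hw i hi). pose proof (hp i hi). pose proof (hxpos p hp i hi). pose proof (hxd i hi).
      assert (hmin : Rabs (x i p - w i) / (d - 1) <= Rmin (Rabs (x i p - w i)) (w i)).
      { apply Rmin_ge_div; [lra|apply Rabs_pos|]. unfold Rabs; destruct Rcase_abs; nra. }
      replace (lam / (d - 1) * (p i * Rabs (x i p - w i)))
        with (lam * (p i * (Rabs (x i p - w i) / (d - 1)))) by (field; lra).
      apply Rmult_le_compat_l; [lra|]. apply Rmult_le_compat_l; lra. }
    lra.
Qed.
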